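(* Let $\Lambda\subset\mathbb{C}$ be a lattice, $p,q\ge2$ integers and $r\ge1$. Then $A_r^{sp}(z/q)B_r^{sp}(z)=B_r^{sp}(z/p)A_r^{sp}(z)$.
   Context: $\zeta(z,\Lambda)$ is the Weierstrass zeta function of $\Lambda$; $g_p(z)=p\zeta(qz,\Lambda)-\zeta(pqz,\Lambda)$ and $g_q(z)=q\zeta(pz,\Lambda)-\zeta(pqz,\Lambda)$. $A_r^{sp}=(a_{ij})$ is the upper triangular $r\times r$ matrix with $a_{ij}=\frac{p^{i-1}}{(j-i)!}g_p(z)^{j-i}$ for $i\le j$; $B_r^{sp}=(b_{ij})$ is the upper triangular matrix with $b_{ij}=\frac{q^{i-1}}{(j-i)!}g_q(z)^{j-i}$ for $i\le j$. *)

From HB Require Import structures.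
From mathcomp Require Import all_boot all_order all_algebra.
From mathcomp Require Import complex.
From mathcomp Require Import all_classical all_reals all_analysis.
Set Implicit Arguments. Unset Strict Implicit. Unset Printing Implicit Defensive.
Import Order.TTheory GRing.Theory Num.Theory Num.Def ComplexField.
Import numFieldNormedType.Exports.
Local Open Scope ring_scope.
Local Open Scope complex_scope.
Local Open Scope classical_set_scope.

Definition is_lattice_basis (R : realType) (w1 w2 : R[i]) : Prop :=
  forall a b : R, a%:C * w1 + b%:C * w2 = 0 -> a = 0 /\ b = 0.

Definition in_lattice (R : realType) (w1 w2 z : R[i]) : Prop :=
  exists m n : int, z = m%:~R * w1 + n%:~R * w2.

(* Symmetric square partial sums of the (absolutely convergent) series
   sum_{w in Lambda \ 0} (1/(z-w) + 1/w + z/w^2), over w = m w1 + n w2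
   with |m|,|n| <= N. *)
Definition zeta_partial (R : realType) (w1 w2 z : R[i]) (N : nat) : R[i] :=
  \sum_(i < (N + N).+1) \sum_(j < (N + N).+1 | (i, j) != (inord N, inord N))
    let w := ((i : nat)%:Z - N%:Z)%:~R * w1 + ((j : nat)%:Z - N%:Z)%:~R * w2 in
    ((z - w)^-1 + w^-1 + z / w ^+ 2).

(* Weierstrass zeta function zeta(z, Lambda) (meaningful for z not in Lambda). *)
Definition wzeta (R : realType) (w1 w2 z : R[i]) : R[i] :=
  z^-1 + limn (zeta_partial w1 w2 z : nat -> (R[i])^o).

Definition g_p (R : realType) (w1 w2 : R[i]) (p q : nat) (z : R[i]) : R[i] :=
  p%:R * wzeta w1 w2 (q%:R * z) - wzeta w1 w2 ((p * q)%:R * z).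

Definition g_q (R : realType) (w1 w2 : R[i]) (p q : nat) (z : R[i]) : R[i] :=
  q%:R * wzeta w1 w2 (p%:R * z) - wzeta w1 w2 ((p * q)%:R * z).

(* Upper triangular r x r matrix with (i,j) entry (1-based) c^(i-1)/(j-i)! g^(j-i)
   for i <= j; here indices are 0-based so the entry is c^i/(j-i)! g^(j-i). *)
Definition sp_mx (R : realType) (r : nat) (c : nat) (g : R[i]) : 'M[R[i]]_r :=
  \matrix_(i < r, j < r)
    if (i <= j)%N then (c ^ i)%:R / ((j - i)`!)%:R * g ^+ (j - i) else 0.

Definition A_sp (R : realType) (w1 w2 : R[i]) (p q r : nat) (z : R[i]) : 'M[R[i]]_r :=
  sp_mx r p (g_p w1 w2 p q z).

Definition B_sp (R : realType) (w1 w2 : R[i]) (p q r : nat) (z : R[i]) : 'M[R[i]]_r :=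
  sp_mx r q (g_q w1 w2 p q z).

(* Read c and g as the pair (c, g) acting by diag(c^i) * exp(g N), N the nilpotent
   shift: then [sp_mx c1 a *m sp_mx c2 b = sp_mx (c1 c2) (c2 a + b)], the entries
   being combined by the binomial theorem.  Both sides of the theorem thus equal
   [sp_mx (p q) (p q zeta(z) - zeta(p q z))]; the identity is formal in zeta. *)
From HB Require Import structures.
From mathcomp Require Import all_boot all_order all_algebra.
From mathcomp Require Import complex.
From mathcomp Require Import all_classical all_reals all_analysis.
From mathcomp Require Import ring.
Import Order.TTheory GRing.Theory Num.Theory ComplexField.
Local Open Scope ring_scope.

Lemma natr_fact_neq0 (F : numFieldType) (n : nat) : n`!%:R != 0 :> F.
Proof. by rewrite pnatr_eq0 -lt0n fact_gt0. Qed.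

Lemma sum_expr_div_fact (F : numFieldType) (x y : F) (n : nat) :
  \sum_(m < n.+1) x ^+ m / m`!%:R * (y ^+ (n - m) / (n - m)`!%:R)
  = (x + y) ^+ n / n`!%:R.
Proof.
rewrite addrC exprDn mulr_suml; apply: eq_bigr => -[m /= lt_mn] _.
rewrite ltnS in lt_mn.
rewrite -(bin_fact lt_mn) !natrM -[_ *+ 'C(n, m)]mulr_natr.
have := natr_fact_neq0 F m; have := natr_fact_neq0 F (n - m).
have : 'C(n, m)%:R != 0 :> F by rewrite pnatr_eq0 -lt0n bin_gt0.
move: (m`!%:R) ((n - m)`!%:R) ('C(n, m)%:R) => X Y Z nzZ nzY nzX.
by field; rewrite nzX nzY nzZ.
Qed.

Lemma big_ord_interval (V : zmodType) (r i k : nat) (G : nat -> V) :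
  (i <= k < r)%N -> (forall j, ~~ (i <= j <= k)%N -> G j = 0) ->
  \sum_(j < r) G j = \sum_(m < (k - i).+1) G (i + m)%N.
Proof.
move=> /andP[le_ik lt_kr] G0.
have le_ir : (i <= r)%N by rewrite (leq_trans le_ik) // ltnW.
rewrite -(big_mkord xpredT) (big_cat_nat _ (n := i)) //= (@big_cat_nat _ _ _ k.+1 i r) ?leqW //=.
have -> : \sum_(0 <= j < i) G j = 0.
  rewrite big_nat_cond big1 // => j /andP[/andP[_ lt_ji] _].
  by apply: G0; rewrite leqNgt lt_ji.
have -> : \sum_(k.+1 <= j < r) G j = 0.
  rewrite big_nat_cond big1 // => j /andP[/andP[lt_kj _] _].
  by apply: G0; rewrite (leqNgt j k) lt_kj andbF.
rewrite add0r addr0 -{1}(add0n i) big_addn subSn // big_mkord.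
by under eq_bigr do rewrite addnC.
Qed.

Lemma sp_mx_mul (R : realType) (r c1 c2 : nat) (a b : R[i]) :
  sp_mx r c1 a *m sp_mx r c2 b = sp_mx r (c1 * c2) (a * c2%:R + b).
Proof.
apply/matrixP => i k; rewrite !mxE.
under eq_bigr do rewrite !mxE.
case: (leqP i k) => [le_ik|lt_ki]; last first.
  rewrite big1 // => j _.
  case: (leqP i j) => [le_ij|]; last by rewrite mul0r.
  by rewrite leqNgt (leq_trans lt_ki le_ij) mulr0.
rewrite (@big_ord_interval _ r i k
  (fun j => (if (i <= j)%N then (c1 ^ i)%:R / ((j - i)`!)%:R * a ^+ (j - i) else 0) *
            (if (j <= k)%N then (c2 ^ j)%:R / ((k - j)`!)%:R * b ^+ (k - j) else 0))); last 2 first.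
- by rewrite le_ik ltn_ord.
- by move=> j; rewrite negb_and => /orP[/negbTE->|/negbTE->]; rewrite ?mul0r ?mulr0.
rewrite mulrAC -mulrA -sum_expr_div_fact mulr_sumr; apply: eq_bigr => -[m /=].
rewrite ltnS leq_subRL // => le_mk _.
rewrite leq_addr le_mk addKn subnDA expnMn expnD !natrM !natrX exprMn.
by ring.
Qed.

Section GpGqShift.

Variables (R : realType) (w1 w2 : R[i]) (p q : nat) (z : R[i]).

Lemma g_p_div_q_shift : q%:R != 0 :> R[i] ->
  g_p w1 w2 p q (z / q%:R) * q%:R + g_q w1 w2 p q z
  = (p * q)%:R * wzeta w1 w2 z - wzeta w1 w2 ((p * q)%:R * z).
Proof.
move=> nz_q; have zq : q%:R * (z / q%:R) = z by rewrite mulrC divfK.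
have zpq : (p * q)%:R * (z / q%:R) = p%:R * z by rewrite natrM -mulrA zq.
by rewrite /g_p /g_q zpq zq; ring.
Qed.

Lemma g_q_div_p_shift : p%:R != 0 :> R[i] ->
  g_q w1 w2 p q (z / p%:R) * p%:R + g_p w1 w2 p q z
  = (p * q)%:R * wzeta w1 w2 z - wzeta w1 w2 ((p * q)%:R * z).
Proof.
move=> nz_p; have zp : p%:R * (z / p%:R) = z by rewrite mulrC divfK.
have zpq : (p * q)%:R * (z / p%:R) = q%:R * z by rewrite mulnC natrM -mulrA zp.
by rewrite /g_p /g_q zpq zp; ring.
Qed.

End GpGqShift.

Theorem lemma5p10 (R : realType) (w1 w2 : R[i]) (p q r : nat)
  (hL : is_lattice_basis w1 w2) (hp : (2 <= p)%N) (hq : (2 <= q)%N) (hr : (1 <= r)%N)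
  (z : R[i]) (hz : ~ in_lattice w1 w2 ((p * q)%:R * z)) :
  A_sp w1 w2 p q r (z / q%:R) *m B_sp w1 w2 p q r z
  = B_sp w1 w2 p q r (z / p%:R) *m A_sp w1 w2 p q r z.
Proof.
have nz_nat n : (2 <= n)%N -> n%:R != 0 :> R[i].
  by move=> le2n; rewrite pnatr_eq0 -lt0n (leq_trans _ le2n).
rewrite /A_sp /B_sp !sp_mx_mul (mulnC q p).
by rewrite g_p_div_q_shift ?g_q_div_p_shift ?nz_nat.
Qed.
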